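(* Let $1\to K\to G\xrightarrow{p} Q\to 1$ be an exact sequence of groups, where $K$ is a torsion group (so $p:G\to Q$ is a surjection with kernel $K$). Then an element $g\in G$ is a genuine generalized torsion element of $G$ if and only if $p(g)$ is a genuine generalized torsion element of $Q$.
   Context: For $g,x$ in a group, $g^{x}:=xgx^{-1}$. A non-trivial element $g$ of a group $G$ is a generalized torsion element if there exist a positive integer $n$ and $x_1,\ldots,x_n\in G$ with $g^{x_1}g^{x_2}\cdots g^{x_n}=1$. A generalized torsion element is genuine if it is not a torsion element. A torsion group is a group all of whose elements have finite order. *)

From Stdlib Require Import List Arith.
Import ListNotations.

Record Group := {
  carrier :> Type;
  gmul : carrier -> carrier -> carrier;
  gone : carrier;
  ginv : carrier -> carrier;
  gmulA : forall x y z, gmul x (gmul y z) = gmul (gmul x y) z;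
  gmul1g : forall x, gmul gone x = x;
  gmulg1 : forall x, gmul x gone = x;
  gmulVg : forall x, gmul (ginv x) x = gone;
  gmulgV : forall x, gmul x (ginv x) = gone
}.

Arguments gmul {G} : rename.
Arguments gone {G} : rename.
Arguments ginv {G} : rename.

Definition gconj {G : Group} (g x : G) : G := gmul x (gmul g (ginv x)).

Fixpoint gpow {G : Group} (g : G) (n : nat) : G :=
  match n with O => gone | S m => gmul g (gpow g m) end.

Definition torsion_elt {G : Group} (g : G) : Prop :=
  exists n : nat, 0 < n /\ gpow g n = gone.

Definition torsion_group (G : Group) : Prop := forall g : G, torsion_elt g.

Definition conj_prod {G : Group} (g : G) (xs : list G) : G :=
  fold_right (fun x acc => gmul (gconj g x) acc) gone xs.

Definition gen_torsion {G : Group} (g : G) : Prop :=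
  g <> gone /\ exists xs : list G, xs <> [] /\ conj_prod g xs = gone.

Definition genuine_gen_torsion {G : Group} (g : G) : Prop :=
  gen_torsion g /\ ~ torsion_elt g.

Definition is_hom {G H : Group} (f : G -> H) : Prop :=
  forall x y, f (gmul x y) = gmul (f x) (f y).

(* The kernel of p, viewed as a group: every element of the kernel has
   finite order in G (equivalently in the subgroup K = ker p). *)
Definition torsion_kernel {G Q : Group} (p : G -> Q) : Prop :=
  forall k : G, p k = gone -> torsion_elt k.

(* A homomorphism maps a product of conjugates of g to a product of conjugates
   of p g, and maps finite-order elements to finite-order elements.
   Conversely, if p g ^ n = 1 then g ^ n lies in the torsion kernel, so g has
   finite order; and if a product of conjugates of p g is trivial, lifting the
   conjugating elements through the surjection p gives a product of conjugates
   of g lying in the kernel, hence of some finite order m, and repeating the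
   list m times yields a trivial product of conjugates of g. *)
From Stdlib Require Import List Arith Lia.
Import ListNotations.

Section GroupFacts.
Variable G : Group.

Lemma gmul_idem_one (a : G) : gmul a a = a -> a = gone.
Proof.
  intro Haa. rewrite <- (gmul1g G a), <- (gmulVg G a) at 1.
  rewrite <- gmulA, Haa. apply gmulVg.
Qed.

Lemma gmul_eq_one_inv (a b : G) : gmul a b = gone -> b = ginv a.
Proof.
  intro Hab. rewrite <- (gmul1g G b), <- (gmulVg G a).
  rewrite <- gmulA, Hab. apply gmulg1.
Qed.

Lemma gpow_add (g : G) m n : gpow g (m + n) = gmul (gpow g m) (gpow g n).
Proof.
  induction m as [|m IH]; simpl.
  - now rewrite gmul1g.
  - now rewrite IH, gmulA.
Qed.

Lemma gpow_mul (g : G) m n : gpow g (m * n) = gpow (gpow g m) n.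
Proof.
  induction n as [|n IH].
  - now rewrite Nat.mul_0_r.
  - now rewrite Nat.mul_succ_r, Nat.add_comm, gpow_add, IH.
Qed.

Lemma torsion_elt_gone : torsion_elt (@gone G).
Proof. exists 1. split; [lia | apply gmulg1]. Qed.

Lemma torsion_elt_of_gpow (g : G) n :
  0 < n -> torsion_elt (gpow g n) -> torsion_elt g.
Proof.
  intros Hn [m [Hm Hgnm]]. exists (n * m).
  split; [lia | now rewrite gpow_mul].
Qed.

Lemma conj_prod_app (g : G) xs ys :
  conj_prod g (xs ++ ys) = gmul (conj_prod g xs) (conj_prod g ys).
Proof.
  induction xs as [|x xs IH]; simpl.
  - now rewrite gmul1g.
  - unfold conj_prod in *. simpl. now rewrite IH, gmulA.
Qed.

Lemma conj_prod_repeat (g : G) xs m :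
  conj_prod g (concat (repeat xs m)) = gpow (conj_prod g xs) m.
Proof.
  induction m as [|m IH]; simpl; [reflexivity|].
  now rewrite conj_prod_app, IH.
Qed.

Lemma gen_torsion_of_torsion_conj_prod (g : G) xs :
  g <> gone -> xs <> [] -> torsion_elt (conj_prod g xs) -> gen_torsion g.
Proof.
  intros Hg Hxs [m [Hm Hpow]]. split; [exact Hg|].
  exists (concat (repeat xs m)). split.
  - destruct m as [|m]; [lia|]. simpl. now intros [? _]%app_eq_nil.
  - now rewrite conj_prod_repeat.
Qed.

End GroupFacts.

Section Hom.
Variables G Q : Group.
Variable p : G -> Q.
Hypothesis p_hom : is_hom p.

Lemma hom_one : p gone = gone.
Proof. apply gmul_idem_one. now rewrite <- p_hom, gmul1g. Qed.

Lemma hom_inv x : p (ginv x) = ginv (p x).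
Proof. apply gmul_eq_one_inv. rewrite <- p_hom, gmulgV. apply hom_one. Qed.

Lemma hom_gpow g n : p (gpow g n) = gpow (p g) n.
Proof.
  induction n as [|n IH]; simpl.
  - apply hom_one.
  - now rewrite p_hom, IH.
Qed.

Lemma hom_conj_prod g xs : p (conj_prod g xs) = conj_prod (p g) (map p xs).
Proof.
  induction xs as [|x xs IH]; simpl; [apply hom_one|].
  unfold conj_prod in *. simpl.
  rewrite p_hom, IH. unfold gconj.
  now rewrite !p_hom, hom_inv.
Qed.

Lemma hom_gen_torsion g : p g <> gone -> gen_torsion g -> gen_torsion (p g).
Proof.
  intros Hpg [_ [xs [Hxs Hprod]]]. split; [exact Hpg|].
  exists (map p xs). split.
  - now destruct xs.
  - now rewrite <- hom_conj_prod, Hprod, hom_one.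
Qed.

Hypothesis K_torsion : torsion_kernel p.

Lemma torsion_elt_hom_iff g : torsion_elt (p g) <-> torsion_elt g.
Proof.
  split.
  - intros [n [Hn Hpow]]. apply (torsion_elt_of_gpow _ g n Hn).
    apply K_torsion. now rewrite hom_gpow.
  - intros [n [Hn Hpow]]. exists n. split; [exact Hn|].
    now rewrite <- hom_gpow, Hpow, hom_one.
Qed.

Hypothesis p_surj : forall q : Q, exists g : G, p g = q.

Lemma map_hom_surj (ys : list Q) : exists xs, map p xs = ys.
Proof.
  induction ys as [|y ys [xs Hxs]]; [now exists []|].
  destruct (p_surj y) as [x Hx]. exists (x :: xs). simpl. congruence.
Qed.

Lemma gen_torsion_hom_iff g : p g <> gone -> gen_torsion g <-> gen_torsion (p g).
Proof.
  intro Hpg. split; [now apply hom_gen_torsion|].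
  intros [_ [ys [Hys Hprod]]].
  destruct (map_hom_surj ys) as [xs <-].
  apply (gen_torsion_of_torsion_conj_prod _ g xs).
  - intros ->. now apply Hpg, hom_one.
  - now intros ->.
  - apply K_torsion. now rewrite hom_conj_prod.
Qed.

End Hom.

Theorem theorem1p3 (G Q : Group) (p : G -> Q)
  (p_hom : is_hom p)
  (p_surj : forall q : Q, exists g : G, p g = q)
  (K_torsion : torsion_kernel p) :
  forall g : G, genuine_gen_torsion g <-> genuine_gen_torsion (p g).
Proof.
  intro g. unfold genuine_gen_torsion.
  rewrite (torsion_elt_hom_iff G Q p p_hom K_torsion g).
  assert (pg_ne1 : ~ torsion_elt g -> p g <> gone).
  { intros Hnt Hpg1. apply Hnt, (torsion_elt_hom_iff G Q p p_hom K_torsion).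
    rewrite Hpg1. apply torsion_elt_gone. }
  split; intros [Hgen Hnt]; split; try exact Hnt;
    apply (gen_torsion_hom_iff G Q p p_hom K_torsion p_surj g (pg_ne1 Hnt));
    exact Hgen.
Qed.
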